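(* Let $\mathfrak R\subseteq\mathfrak R(d_*,L_*,s_* )$ be a cubical iterated graph system with replacement graphs $G_m$. Then for all $m\in\mathbb N$ and $w,v\in W_m$, \[ d_{G_m}(w,v)\le 4\operatorname{diam}(G_1)\cdot L_*^m. \]
   Context: Graphs: $(V,E)$, $V$ finite non-empty, $E\subseteq V\times V$, $(x,y)\in E\Rightarrow(y,x)\notin E$; $d_G$ is the shortest-path metric in the underlying undirected graph and $\operatorname{diam}$ the corresponding diameter. An iterated graph system (IGS) $\mathfrak R$ consists of a connected graph $G_1=(S,E)$, a finite set $\mathcal T$ of types, a surjective typing $\mathfrak t:E\to\mathcal T$ and non-empty gluing rules $I_t\subseteq S\times S$. With $W_m=S^m$, $[w]_k=w_1\cdots w_k$, the replacement graphs $G_m=(W_m,E_m)$ are defined recursively: $(w,v)\in E_{m+1}$ iff either (1) $[w]_m=[v]_m$ and $(w_{m+1},v_{m+1})\in E$ (type $\mathfrak t(w_{m+1},v_{m+1})$), or (2) $([w]_m,[v]_m)\in E_m$ and $(w_{m+1},v_{m+1})\in I_{\mathfrak t([w]_m,[v]_m)}$ (type $\mathfrak t([w]_m,[v]_m)$). Mapping of IGS $\varphi:\mathfrak R\to\mathfrak R'$: a graph mapping $G_1\to G_1'$ (edges go to edges or are collapsed) such that (i) if $\varphi(w_1)=\varphi(v_1)$ for an edge $\{w_1,v_1\}$ of type $t$ then $\varphi(w_2)=\varphi(v_2)$ for all $(w_2,v_2)\in I_t$; (ii) if $(w_1,v_1)\in E$ has type $t$ and $(\varphi(w_1),\varphi(v_1))\in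 E'$ has type $t'$ then $(\varphi(w_2),\varphi(v_2))\in I'_{t'}$ for all $(w_2,v_2)\in I_t$; (iii) if $(w_1,v_1)\in E$ has type $t$ and $(\varphi(v_1),\varphi(w_1))\in E'$ has type $t'$ then $(\varphi(v_2),\varphi(w_2))\in I'_{t'}$ for all $(w_2,v_2)\in I_t$. Isomorphism of IGS: graph isomorphism with it and its inverse mappings of IGS; sub-system $\mathfrak R\subseteq\mathfrak R'$: $S\subseteq S'$, same types, inclusion a mapping of IGS. Cubical IGS: for integers $d_*\ge1,s_*\ge1,L_*\ge3$, $\mathfrak R(d_*,L_*,s_* )$ has symbols $\{1,\dots,L_*\}^{d_*}\times\{\underline1,\dots,\underline{s_*}\}$ with coordinates $c_i$ and sheet $s$; types $t_1,\dots,t_{d_*}$; $(w,v)$ is an edge of type $t_j$ iff $c_i(v)=c_i(w)$ ($i\ne j$), $c_j(v)=c_j(w)+1$; $(w,v)\in I_{t_j}$ iff $c_i(w)=c_i(v)$ ($i\ne j$), $(c_j(w),c_j(v))=(L_*,1)$, $s(w)=s(v)$. Sheet- and other-coordinate-preserving maps: $\eta_j:c_j\mapsto L_*+1-c_j$; $\alpha^+_{j,k}$ ($j\ne k$) swaps $c_j,c_k$; $\alpha^-_{j,k}$: $c_k\mapsto L_*+1-c_j$, $c_j\mapsto L_*+1-c_k$; $\mathcal G$ the set of these. A cubical IGS is a sub-system $\mathfrak R\subseteq\mathfrak R(d_*,L_*,s_* )$ with: (C1) for each $j$, every symbol with $c_i\in\{1,L_*\}$ for all $i\ne j$ and sheet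 $\underline1$ (condition $(\ast_j)$) is in $S(\mathfrak R)$; (C2) if $w,v$ satisfy $(\ast_j)$, agree off coordinate $j$, and $c_j(v)=c_j(w)+1$, then $(w,v)\in E(\mathfrak R)$; (C3) if $w,v$ satisfy $(\ast_j)$, agree off coordinate $j$, and $(c_j(w),c_j(v))=(L_*,1)$, then $(w,v)\in I_{t_j}(\mathfrak R)$; (C4) each $\alpha\in\mathcal G$ restricts to an isomorphism of IGS $\mathfrak R\to\mathfrak R$. *)

From mathcomp Require Import all_boot.
Set Implicit Arguments. Unset Strict Implicit. Unset Printing Implicit Defensive.

(* Symbols live in a finite ambient type S; the actual symbol set is iV.
   Types live in a finite type T.  The typing is partial (option T): only its
   values on edges matter. *)
Record igs (S T : finType) := IGS {
  iV : {set S};                 (* symbol set S(R), vertex set of G_1 *)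
  iE : rel S;                   (* oriented edges of G_1 *)
  ityp : S -> S -> option T;
  iI : T -> rel S               (* gluing rules I_t *)
}.

Section Generic.
Variables (S T : finType).

Definition adj1 (R : igs S T) : rel S := fun x y => iE R x y || iE R y x.

Definition igs_wf (R : igs S T) : Prop :=
  [/\ iV R != set0,
      (forall x y, iE R x y -> (x \in iV R) /\ (y \in iV R)),
      (forall x y, iE R x y -> ~~ iE R y x),
      (forall x y, x \in iV R -> y \in iV R -> connect (adj1 R) x y)
    & [/\ (forall x y, iE R x y -> ityp R x y != None),
      (forall t, exists x y, iE R x y /\ ityp R x y = Some t)
    & (forall t, (exists x y, iI R t x y) /\
                 (forall x y, iI R t x y -> (x \in iV R) /\ (y \in iV R)))]].

(* ---- replacement graphs G_m ----
   Words w = w_1 ... w_m are seq S of size m with letters in iV.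
   etype_rev works on reversed words (head = last letter w_m) and returns
   the type of the edge (w,v) of G_m, or None if (w,v) is not an edge. *)
Fixpoint etype_rev (R : igs S T) (w v : seq S) : option T :=
  match w, v with
  | a :: p, b :: q =>
      if (p == q) && iE R a b then ityp R a b
      else match etype_rev R p q with
           | Some t => if iI R t a b then Some t else None
           | None => None
           end
  | _, _ => None
  end.

Definition word_in (R : igs S T) (m : nat) (w : seq S) : bool :=
  (size w == m) && all (fun a => a \in iV R) w.

Definition Em (R : igs S T) (m : nat) : rel (seq S) := fun w v =>
  [&& word_in R m w, word_in R m v & etype_rev R (rev w) (rev v) != None].

Definition adjm (R : igs S T) (m : nat) : rel (seq S) :=
  fun w v => Em R m w v || Em R m v w.

End Generic.

Definition within_dist (A : eqType) (e : rel A) (x y : A) (n : nat) : Prop :=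
  exists p : seq A, [/\ path e x p, last x p = y & size p <= n].

(* shortest-path distance on a finite graph; since shortest paths have fewer
   than #|T| steps this is exact for connected pairs (convention: #|T|
   otherwise, never used since G_1 is connected). *)
Definition reachn (T : finType) (e : rel T) (n : nat) (x y : T) : bool :=
  [exists t : n.-tuple T, path e x t && (last x t == y)].

Definition gdist (T : finType) (e : rel T) (x y : T) : nat :=
  \big[minn/#|T|]_(n < #|T| | reachn e n x y) n.

Definition diam1 (S T : finType) (R : igs S T) : nat :=
  \max_(x in iV R) \max_(y in iV R) gdist (adj1 R) x y.

Definition igs_mapping (S T S' T' : finType) (R : igs S T) (R' : igs S' T')
    (phi : S -> S') : Prop :=
  [/\ (forall x, x \in iV R -> phi x \in iV R'),
      (forall x y, iE R x y ->
         [\/ phi x = phi y, iE R' (phi x) (phi y) | iE R' (phi y) (phi x)]),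
      (forall x y t, iE R x y -> ityp R x y = Some t -> phi x = phi y ->
         forall a b, iI R t a b -> phi a = phi b),
      (forall x y t t', iE R x y -> ityp R x y = Some t ->
         iE R' (phi x) (phi y) -> ityp R' (phi x) (phi y) = Some t' ->
         forall a b, iI R t a b -> iI R' t' (phi a) (phi b))
    & (forall x y t t', iE R x y -> ityp R x y = Some t ->
         iE R' (phi y) (phi x) -> ityp R' (phi y) (phi x) = Some t' ->
         forall a b, iI R t a b -> iI R' t' (phi b) (phi a))].

Definition igs_iso (S T S' T' : finType) (R : igs S T) (R' : igs S' T')
    (phi : S -> S') (psi : S' -> S) : Prop :=
  [/\ (forall x, x \in iV R -> phi x \in iV R' /\ psi (phi x) = x),
      (forall y, y \in iV R' -> psi y \in iV R /\ phi (psi y) = y),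
      (forall x y, x \in iV R -> y \in iV R ->
         adj1 R x y = adj1 R' (phi x) (phi y)),
      igs_mapping R R' phi
    & igs_mapping R' R psi].

(* ---------- cubical IGS ----------
   Convention: coordinates are 0-based, c_i in {0,...,L-1} (paper: 1..L),
   sheet in {0,...,s-1} (paper: 1..s); type t_j is j : I_d. *)
Definition Sym (d L s : nat) := ({ffun 'I_d -> 'I_L} * 'I_s)%type.

Section Cube.
Variables d L s : nat.
Implicit Types w v : Sym d L s.

Definition crd w (i : 'I_d) : nat := w.1 i.
Definition sheet w : nat := w.2.

Definition cube_edge (j : 'I_d) w v : bool :=
  [forall i, (i != j) ==> (crd w i == crd v i)] && (crd v j == (crd w j).+1).

Definition cube_glue (j : 'I_d) w v : bool :=
  [&& [forall i, (i != j) ==> (crd w i == crd v i)],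
      crd w j == L.-1, crd v j == 0 & sheet w == sheet v].

Definition Rfull : igs (Sym d L s) 'I_d :=
  {| iV := setT;
     iE := fun w v => [exists j, cube_edge j w v];
     ityp := fun w v => [pick j | cube_edge j w v];
     iI := cube_glue |}.

Definition star (j : 'I_d) w : bool :=
  [forall i, (i != j) ==> ((crd w i == 0) || (crd w i == L.-1))] && (sheet w == 0).

Definition eta_map (j : 'I_d) w : Sym d L s :=
  ([ffun i => if i == j then rev_ord (w.1 i) else w.1 i], w.2).
Definition alphap (j k : 'I_d) w : Sym d L s :=
  ([ffun i => if i == j then w.1 k else if i == k then w.1 j else w.1 i], w.2).
Definition alpham (j k : 'I_d) w : Sym d L s :=
  ([ffun i => if i == j then rev_ord (w.1 k)
              else if i == k then rev_ord (w.1 j) else w.1 i], w.2).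

(* the set G of symmetries (all are involutions) *)
Definition in_G (f : Sym d L s -> Sym d L s) : Prop :=
  (exists j, f = eta_map j) \/
  (exists j k, j != k /\ (f = alphap j k \/ f = alpham j k)).

Definition cubical (R : igs (Sym d L s) 'I_d) : Prop :=
  igs_wf R /\ igs_mapping R Rfull id /\                 (* sub-system *)
  [/\
         (forall j w, star j w -> w \in iV R),
      (forall j w v, star j w -> star j v ->
         (forall i, i != j -> crd w i = crd v i) ->
         crd v j = (crd w j).+1 -> iE R w v),
      (forall j w v, star j w -> star j v ->
         (forall i, i != j -> crd w i = crd v i) ->
         crd w j = L.-1 -> crd v j = 0 -> iI R j w v)
    & (forall f, in_G f -> igs_iso R R f f)].

End Cube.

From mathcomp Require Import all_boot all_order zify.
Set Implicit Arguments. Unset Strict Implicit. Unset Printing Implicit Defensive.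
Import Order.TTheory.

(* Call a symbol a corner if its coordinates are all extreme and its sheet is
   the first one.  By (C1)-(C3), two corners differing only in coordinate j
   are the ends of a line of type-j edges and are glued by I_{t_j}; running
   along that line at the first letter, and recursively at the deeper ones,
   joins their constant words c^m, c'^m within L^m - 1 steps.  An edge (x, y)
   of G_1 of type t lifts to the edge (x c^m, y c'^m) of G_{m+1} whenever
   (c, c') is a pair of corners glued by I_t, so after adjusting the tail,
   moving the first letter along an edge of G_1 costs at most L^m steps.
   Hence, with D = diam G_1, every word of length m + 1 reaches a fixed
   constant corner word within 3 D L^m <= D L^(m+1) steps: bring the tail to
   corner form, move the first letter along a geodesic, then correct the new
   tail.  Going through that word from both ends gives 2 D L^m. *)

Section WithinDist.
Variables (A : eqType) (e : rel A).

Lemma within_dist_refl x n : within_dist e x x n.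
Proof. by exists [::]. Qed.

Lemma within_dist_edge x y : e x y -> within_dist e x y 1.
Proof. by move=> exy; exists [:: y]; rewrite /= exy. Qed.

Lemma within_dist_le x y m n :
  m <= n -> within_dist e x y m -> within_dist e x y n.
Proof.
by move=> le_mn [p [e_p <- le_pm]]; exists p; split=> //; exact: leq_trans le_mn.
Qed.

Lemma within_dist_cat x y z m n :
  within_dist e x y m -> within_dist e y z n -> within_dist e x z (m + n).
Proof.
move=> [p [e_p <- le_pm]] [q [e_q <- le_qn]]; exists (p ++ q).
by rewrite cat_path e_p e_q last_cat size_cat leq_add.
Qed.

Lemma within_dist_sym x y n :
  symmetric e -> within_dist e x y n -> within_dist e y x n.
Proof.
move=> e_sym [p [e_p <- le_pn]]; exists (rev (belast x p)); split.
- by move: e_p; rewrite rev_path; apply: sub_path => a b /=; rewrite e_sym.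
- by case: p {e_p le_pn} => [|a p] //=; rewrite rev_cons last_rcons.
- by rewrite size_rev size_belast.
Qed.

Lemma within_dist_homo (B : eqType) (e' : rel B) (f : A -> B) x y n :
  {homo f : a b / e a b >-> e' a b} ->
  within_dist e x y n -> within_dist e' (f x) (f y) n.
Proof.
move=> f_homo [p [e_p <- le_pn]]; exists (map f p).
by rewrite last_map size_map (homo_path f_homo).
Qed.

End WithinDist.

Section ShortestPaths.
Variables (T : finType) (e : rel T).

Lemma reachn_within_dist n x y : reachn e n x y -> within_dist e x y n.
Proof. by case/existsP=> p /andP[e_p /eqP <-]; exists p; rewrite size_tuple. Qed.

Lemma connect_reachn x y : connect e x y -> exists2 n, n < #|T| & reachn e n x y.
Proof.
case/connectP=> p0 e_p0 ->; case: (shortenP e_p0) => p e_p p_uniq _.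
exists (size p); last by apply/existsP; exists (in_tuple p); rewrite /= e_p eqxx.
by move/card_uniqP: p_uniq => /= <-; apply: max_card.
Qed.

Lemma within_dist_gdist x y : connect e x y -> within_dist e x y (gdist e x y).
Proof.
case/connect_reachn=> n lt_nT reach_n; apply: reachn_within_dist.
have [k reach_k gdistE] := @eq_bigmin _ nat _ _ (Ordinal lt_nT)
  (fun k => reachn e k x y) val reach_n (fun k _ => ltnW (ltn_ord k)).
by have -> : gdist e x y = k by exact: gdistE.
Qed.

End ShortestPaths.

Section ReplacementGraphs.
Variables (S T : finType) (R : igs S T).

Lemma word_in_cons m x u : word_in R m.+1 (x :: u) = (x \in iV R) && word_in R m u.
Proof. by rewrite /word_in /= eqSS andbCA. Qed.

Lemma word_in_nseq m x : x \in iV R -> word_in R m (nseq m x).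
Proof. by move=> xV; rewrite /word_in size_nseq eqxx all_nseq xV orbT. Qed.

Lemma adjm_sym m : symmetric (adjm R m).
Proof. by move=> u v; rewrite /adjm orbC. Qed.

Lemma etype_rev_rcons p q x : ~~ iE R x x -> size p = size q ->
  etype_rev R (rcons p x) (rcons q x) = etype_rev R p q.
Proof.
move=> Exx; elim: p q => [|a p IHp] [|b q] //=; first by rewrite (negbTE Exx).
by case=> size_pq; rewrite IHp // eqseq_rcons eqxx andbT.
Qed.

Lemma etype_rev_glue n x y t a b : x != y -> iE R x y -> ityp R x y = Some t ->
  iI R t a b -> etype_rev R (rcons (nseq n a) x) (rcons (nseq n b) y) = Some t.
Proof.
move=> neq_xy Exy txy Iab; elim: n => [|n IHn] /=; first by rewrite Exy txy.
by rewrite IHn Iab eqseq_rcons (negbTE neq_xy) andbF.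
Qed.

Hypothesis wfR : igs_wf R.

Lemma iE_irr x : ~~ iE R x x.
Proof.
by case: wfR => _ _ asym _ _; apply/negP => Exx; have := asym x x Exx; rewrite Exx.
Qed.

Lemma iE_iV x y : iE R x y -> x \in iV R /\ y \in iV R.
Proof. by case: wfR => _ E_V _ _ _; apply: E_V. Qed.

Lemma iE_typed x y : iE R x y -> exists t, ityp R x y = Some t.
Proof. by case: wfR => _ _ _ _ [typed _ _] /typed; case: ityp => // t _; exists t. Qed.

Lemma Em_cons m x u v : x \in iV R -> Em R m.+1 (x :: u) (x :: v) = Em R m u v.
Proof.
move=> xV; rewrite /Em !word_in_cons xV /= !rev_cons.
case/boolP: (word_in R m u) => // /andP[/eqP size_u _].
case/boolP: (word_in R m v) => // /andP[/eqP size_v _].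
by rewrite etype_rev_rcons ?iE_irr // !size_rev size_u size_v.
Qed.

Lemma adjm_cons m x u v : x \in iV R -> adjm R m.+1 (x :: u) (x :: v) = adjm R m u v.
Proof. by move=> xV; rewrite /adjm !Em_cons. Qed.

Lemma within_dist_cons m x u v n : x \in iV R ->
  within_dist (adjm R m) u v n -> within_dist (adjm R m.+1) (x :: u) (x :: v) n.
Proof. by move=> xV; apply: within_dist_homo => a b; rewrite adjm_cons. Qed.

Lemma Em_glue m x y t a b : iE R x y -> ityp R x y = Some t ->
  iI R t a b -> a \in iV R -> b \in iV R ->
  Em R m.+1 (x :: nseq m a) (y :: nseq m b).
Proof.
move=> Exy txy Iab aV bV; have [xV yV] := iE_iV Exy.
have neq_xy : x != y by apply: contraTneq Exy => <-; exact: iE_irr.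
rewrite /Em !word_in_cons xV yV !word_in_nseq //= !rev_cons !rev_nseq.
by rewrite (etype_rev_glue _ neq_xy Exy txy Iab).
Qed.

Lemma within_dist_diam1 x y : x \in iV R -> y \in iV R ->
  within_dist (adj1 R) x y (diam1 R).
Proof.
move=> xV yV; have [_ _ _ conn _] := wfR.
apply: within_dist_le (within_dist_gdist (conn x y xV yV)).
by apply: leq_trans (leq_bigmax_cond _ xV); exact: leq_bigmax_cond.
Qed.

End ReplacementGraphs.

Section Cube.
Variables (d l s : nat) (R : igs (Sym d l.+3 s.+1) 'I_d).
Hypotheses (d_gt0 : 0 < d) (cubR : cubical R).

Local Notation L := l.+3.
Local Notation symbol := (Sym d L s.+1).
Let wfR : igs_wf R := cubR.1.

Definition extreme (v : bool) : 'I_L := if v then ord_max else ord0.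

Definition corner (b : 'I_d -> bool) : symbol := ([ffun i => extreme (b i)], ord0).

Definition line_pt (b : 'I_d -> bool) (j : 'I_d) (k : 'I_L) : symbol :=
  ([ffun i => if i == j then k else extreme (b i)], ord0).

Lemma corner_with b j v : corner [eta b with j |-> v] = line_pt b j (extreme v).
Proof. by congr pair; apply/ffunP => i; rewrite !ffunE /=; case: eqP. Qed.

Lemma line_pt_extreme b j : line_pt b j (extreme (b j)) = corner b.
Proof. by congr pair; apply/ffunP => i; rewrite !ffunE; case: eqP => // ->. Qed.

Lemma star_line_pt b j k : star j (line_pt b j k).
Proof.
rewrite /star /crd /sheet /= eqxx andbT; apply/forallP => i; apply/implyP => neq_ij.
by rewrite ffunE (negbTE neq_ij) /extreme; case: (b i); rewrite eqxx ?orbT.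
Qed.

Lemma line_pt_in b j k : line_pt b j k \in iV R.
Proof. by case: cubR => _ [_ [star_in _ _ _]]; exact: star_in (star_line_pt b j k). Qed.

Lemma corner_in b : corner b \in iV R.
Proof. by rewrite -(line_pt_extreme b (Ordinal d_gt0)) line_pt_in. Qed.

Lemma glue_line_pt b j : iI R j (line_pt b j ord_max) (line_pt b j ord0).
Proof.
case: cubR => _ [_ [_ _ star_glue _]]; apply: star_glue; rewrite ?star_line_pt //.
- by move=> i neq_ij; rewrite /crd !ffunE (negbTE neq_ij).
- by rewrite /crd ffunE eqxx.
- by rewrite /crd ffunE eqxx.
Qed.

Lemma glue_corner b j :
  iI R j (corner [eta b with j |-> true]) (corner [eta b with j |-> false]).
Proof. by rewrite !corner_with; exact: glue_line_pt. Qed.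

Lemma cube_edge_line_pt b j (k k' : 'I_L) :
  k' = k.+1 :> nat -> cube_edge j (line_pt b j k) (line_pt b j k').
Proof.
move=> k'E; rewrite /cube_edge /crd !ffunE eqxx k'E eqxx andbT.
by apply/forallP => i; apply/implyP => neq_ij; rewrite !ffunE (negbTE neq_ij).
Qed.

Lemma cube_edge_uniq j j' (x y : symbol) : cube_edge j x y -> cube_edge j' x y -> j' = j.
Proof.
case/andP=> /forallP x_y_off /eqP y_j /andP[_ /eqP y_j'].
apply/eqP; apply: contraT => neq_j'j.
by move: (x_y_off j'); rewrite neq_j'j y_j' ltn_eqF.
Qed.

(* By (ii) for the inclusion into the full system, the pair of corners glued
   by I_t, which differ in coordinate t, must also be glued by I_{t_j}. *)
Lemma ityp_cube_edge j (x y : symbol) :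
  iE R x y -> cube_edge j x y -> ityp R x y = Some j.
Proof.
move=> Exy j_xy; have [t txy] := iE_typed wfR Exy; rewrite txy; congr Some.
have [_ _ _ glue_full _] := cubR.2.1.
have full_typ : ityp (Rfull d L s.+1) x y = Some j.
  by rewrite /=; case: pickP => [j' /(cube_edge_uniq j_xy) -> | /(_ j)]; rewrite ?j_xy.
have /= := glue_full x y t j Exy txy (introT existsP (ex_intro _ j j_xy)) full_typ _ _
  (glue_line_pt (fun _ => false) t).
case/and4P=> /forallP/(_ t) + _ _ _; rewrite /crd !ffunE eqxx.
by apply: contraTeq => /negbTE ->.
Qed.

Lemma Em_line_step m b j (k k' : 'I_L) : k' = k.+1 :> nat ->
  Em R m.+1 (line_pt b j k :: nseq m (line_pt b j ord_max))
            (line_pt b j k' :: nseq m (line_pt b j ord0)).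
Proof.
move=> k'E; have j_kk' := cube_edge_line_pt b j k'E.
have E_kk' : iE R (line_pt b j k) (line_pt b j k').
  case: cubR => _ [_ [_ star_edge _ _]]; apply: (star_edge j); rewrite ?star_line_pt //.
  - by move=> i neq_ij; rewrite /crd !ffunE (negbTE neq_ij).
  - by rewrite /crd !ffunE eqxx.
exact: (Em_glue wfR m E_kk' (ityp_cube_edge E_kk' j_kk') (glue_line_pt b j)
  (line_pt_in b j ord_max) (line_pt_in b j ord0)).
Qed.

Lemma within_dist_line m b j :
  within_dist (adjm R m) (nseq m (line_pt b j ord0)) (nseq m (line_pt b j ord_max))
    (L ^ m - 1).
Proof.
elim: m => [|m IHm]; first exact: within_dist_refl.
have Lm_gt0 : 0 < L ^ m by rewrite expn_gt0.
suff walk k : k < L -> within_dist (adjm R m.+1) (nseq m.+1 (line_pt b j ord0))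
    (line_pt b j (inord k) :: nseq m (line_pt b j ord_max)) (k.+1 * L ^ m - 1).
  have := walk l.+2 (ltnSn _); rewrite expnS.
  by have -> : inord l.+2 = ord_max :> 'I_L by apply: val_inj; rewrite /= inordK.
elim: k => [|k IHk] lt_kL.
  have -> : inord 0 = ord0 :> 'I_L by apply: val_inj; rewrite /= inordK.
  by rewrite mul1n; exact (within_dist_cons wfR (line_pt_in b j ord0) IHm).
have step : adjm R m.+1 (line_pt b j (inord k) :: nseq m (line_pt b j ord_max))
    (line_pt b j (inord k.+1) :: nseq m (line_pt b j ord0)).
  by rewrite /adjm Em_line_step ?inordK // ltnW.
have back := within_dist_cons wfR (line_pt_in b j (inord k.+1)) IHm.
apply: within_dist_le (within_dist_cat (within_dist_cat (IHk (ltnW lt_kL))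
  (within_dist_edge step)) back).
by rewrite !mulSn; lia.
Qed.

Lemma within_dist_corner_with m b j v :
  within_dist (adjm R m) (nseq m (corner b)) (nseq m (corner [eta b with j |-> v]))
    (L ^ m - 1).
Proof.
rewrite -(line_pt_extreme b j) corner_with.
case: (b j) v => -[]; rewrite /extreme; try exact: within_dist_refl.
- exact/within_dist_sym/within_dist_line/adjm_sym.
- exact: within_dist_line.
Qed.

Lemma adjm_corner_step m b x y : adj1 R x y ->
  exists t v, adjm R m.+1 (x :: nseq m (corner [eta b with t |-> v]))
                          (y :: nseq m (corner [eta b with t |-> ~~ v])).
Proof.
case/orP=> E_xy; have [t t_xy] := iE_typed wfR E_xy; exists t.
- exists true; rewrite /adjm (Em_glue wfR m E_xy t_xy (glue_corner b t)) //;
    exact: corner_in.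
- exists false; rewrite /adjm (Em_glue wfR m E_xy t_xy (glue_corner b t)) ?orbT //;
    exact: corner_in.
Qed.

Lemma within_dist_head m x y n b : x \in iV R -> within_dist (adj1 R) x y n ->
  exists b', within_dist (adjm R m.+1) (x :: nseq m (corner b))
                         (y :: nseq m (corner b')) (n * L ^ m).
Proof.
have Lm_gt0 : 0 < L ^ m by rewrite expn_gt0.
move=> xV [p [e_p <- le_pn]].
suff [b' walk] : exists b', within_dist (adjm R m.+1) (x :: nseq m (corner b))
    (last x p :: nseq m (corner b')) (size p * L ^ m).
  by exists b'; apply: within_dist_le walk; rewrite leq_mul2r le_pn orbT.
elim: p x b xV {le_pn} e_p => [|z p IHp] x b xV /=.
  by exists b; exact: within_dist_refl.
case/andP=> xz e_p; have zV : z \in iV R by case/orP: xz => /(iE_iV wfR) [].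
have [t [v step]] := adjm_corner_step m b xz.
have [b' walk] := IHp z ([eta b with t |-> ~~ v]) zV e_p; exists b'.
have flip := within_dist_cons wfR xV (within_dist_corner_with m b t v).
apply: within_dist_le
  (within_dist_cat (within_dist_cat flip (within_dist_edge step)) walk).
by rewrite mulSn subnK.
Qed.

Lemma within_dist_corner m w b : word_in R m w ->
  within_dist (adjm R m) w (nseq m (corner b)) (diam1 R * L ^ m).
Proof.
elim: m w b => [|m IHm] [|x w] b //; first by move=> _; exact: within_dist_refl.
rewrite word_in_cons => /andP[xV wW].
have [b' head] := within_dist_head m b xV (within_dist_diam1 wfR xV (corner_in b)).
have tail := IHm _ b (word_in_nseq m (corner_in b')).
apply: within_dist_le (within_dist_cat (within_dist_cat
  (within_dist_cons wfR xV (IHm w b wW)) head) (within_dist_cons wfR (corner_in b) tail)).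
by rewrite expnS; nia.
Qed.

End Cube.

Theorem proposition5p17 (d L s : nat) (R : igs (Sym d L s) 'I_d) :
  1 <= d -> 1 <= s -> 3 <= L -> cubical R ->
  forall (m : nat) (w v : seq (Sym d L s)),
    word_in R m w -> word_in R m v ->
    within_dist (adjm R m) w v (4 * diam1 R * L ^ m).
Proof.
move=> d_gt0 s_gt0 L_ge3 cubR m w v wW vW.
have [l L_eq] : exists l, L = l.+3 by exists (L - 3); lia.
have [s' s_eq] : exists s', s = s'.+1 by exists s.-1; lia.
subst L s; pose b (_ : 'I_d) := false.
have w_c := within_dist_corner d_gt0 cubR b wW.
have v_c := within_dist_corner d_gt0 cubR b vW.
apply: within_dist_le (within_dist_cat w_c (within_dist_sym (adjm_sym R m) v_c)).
by nia.
Qed.
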